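(* Let $b\ge0$, $c\ge0$, $1\le a\le c+1$, and $f\in\mathbb{F}_q[x_1,\dots,x_c]$. Then $\delta_{a;b}(f)$ is a polynomial if and only if for all $c_1,\dots,c_{a-1}\in\mathbb{F}_q$ the following identity of polynomials holds, with $y=\sum_{j=1}^{a-1}c_jx_j$: $$\sum_{i=1}^{a-1}c_i\,x_i^{q^b}\,f(x_1,\dots,x_{i-1},x_{i+1},\dots,x_{a-1},y,x_{a+1},\dots,x_{c+1})=\Big(\sum_{j=1}^{a-1}c_jx_j^{q^b}\Big)f(x_1,\dots,x_{a-1},x_{a+1},\dots,x_{c+1}).$$
   Context: $q$ is a power of a prime. Delta operators: for integers $b\ge0$, $c\ge0$, $1\le a\le c+1$, $\delta_{a;b}:\mathbb{F}_q(x_1,\dots,x_c)\to\mathbb{F}_q(x_1,\dots,x_{c+1})$ sends $f$ to $N/L(x_1,\dots,x_a)$, where $N$ is the $a\times a$ determinant whose $t$-th row is $(x_1^{q^{t-1}},\dots,x_a^{q^{t-1}})$ for $t=1,\dots,a-1$ and whose last row is $(x_1^{q^b}f(\hat x_1),\dots,x_a^{q^b}f(\hat x_a))$, with $f(\hat x_i)=f(x_1,\dots,x_{i-1},x_{i+1},\dots,x_{c+1})$, and $L(x_1,\dots,x_a)=\det(x_j^{q^{t-1}})_{1\le t,j\le a}$. *)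

From HB Require Import structures.
From mathcomp Require Import all_boot all_algebra all_field.
From mathcomp Require Import fraction.
From mathcomp.multinomials Require Import mpoly.

Set Implicit Arguments. Unset Strict Implicit. Unset Printing Implicit Defensive.
Import GRing.Theory.
Local Open Scope ring_scope.

Notation "x %:F" := (@FracField.tofrac _ x).

(* Variables x_1, ..., x_{c+1} are 'X_0, ..., 'X_c (0-indexed). *)

(* Substitution tuple for f(\hat x_i): the c variables of f are sent to
   x_1,...,x_{i-1},x_{i+1},...,x_{c+1} (i 0-indexed here). *)
Definition hat_tuple (F : finFieldType) (c : nat) (i : 'I_c.+1)
  : c.-tuple {mpoly F[c.+1]} :=
  [tuple 'X_(inord (bump i j)) | j < c].

Definition fhat (F : finFieldType) (c : nat) (f : {mpoly F[c]}) (i : 'I_c.+1)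
  : {mpoly F[c.+1]} := f \mPo hat_tuple F i.

Definition delta_num (F : finFieldType) (c a b : nat) (f : {mpoly F[c]})
  : {mpoly F[c.+1]} :=
  \det (\matrix_(t < a, j < a)
     (if (t < a.-1)%N then ('X_(inord j : 'I_c.+1)) ^+ (#|F| ^ t)
      else ('X_(inord j : 'I_c.+1)) ^+ (#|F| ^ b) * fhat f (inord j))).

Definition moore_det (F : finFieldType) (c a : nat) : {mpoly F[c.+1]} :=
  \det (\matrix_(t < a, j < a) ('X_(inord j : 'I_c.+1)) ^+ (#|F| ^ t)).

Definition delta (F : finFieldType) (c a b : nat) (f : {mpoly F[c]})
  : {fraction {mpoly F[c.+1]}} :=
  (delta_num a b f)%:F / (moore_det F c a)%:F.

Definition is_poly_frac (R : idomainType) (r : {fraction R}) : Prop :=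
  exists g : R, r = g%:F.

Definition y_lin (F : finFieldType) (c a : nat) (cs : 'I_a.-1 -> F)
  : {mpoly F[c.+1]} :=
  \sum_(j < a.-1) cs j *: 'X_(inord j : 'I_c.+1).

(* f(x_1,..,x_{i-1},x_{i+1},..,x_{a-1},y,x_{a+1},..,x_{c+1}) :
   f(\hat x_i) with the occurrence of x_a replaced by y (i 0-indexed, i < a-1). *)
Definition fhat_y (F : finFieldType) (c a : nat) (f : {mpoly F[c]})
  (y : {mpoly F[c.+1]}) (i : 'I_c.+1) : {mpoly F[c.+1]} :=
  f \mPo [tuple (if bump i j == a.-1 then y else 'X_(inord (bump i j)))
          | j < c].

From HB Require Import structures.
From mathcomp Require Import all_boot all_algebra all_field.
From mathcomp Require Import fraction.
From mathcomp.multinomials Require Import mpoly.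
From mathcomp Require Import zify.
Import GRing.Theory.
Local Open Scope ring_scope.
Set Implicit Arguments. Unset Strict Implicit. Unset Printing Implicit Defensive.

(* The Moore determinant factors as L_(k+1) = L_k * prod_(v in span(x_1..x_k)) (x_(k+1) - v),
   so L_a is a product of pairwise non-associate linear forms and N / L_a is a polynomial
   iff the numerator N vanishes on every hyperplane x_i = c_1 x_1 + ... + c_(i-1) x_(i-1),
   i <= a.  On such a hyperplane, subtracting c_j times column j from column i of the
   numerator matrix (the Frobenius powers are additive) kills column i except for its
   last entry, the "defect", so N restricts to the defect times a cofactor; for i = a the
   cofactor is L_(a-1) <> 0 and the vanishing of the defect is the stated identity.  For
   i < a, the identity at unit vectors makes f invariant under cyclic shifts of its first
   a - 1 arguments, and the relabelling x_i -> x_(i+1) -> ... -> x_a -> x_i then carries the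
   defect at a (with c padded by zeros) to the defect at i. *)

Lemma eq_mpoly_rmorph (R : comNzRingType) n (S : comNzRingType)
    (g1 g2 : {rmorphism {mpoly R[n]} -> S}) :
  (forall a : R, g1 a%:MP = g2 a%:MP) -> (forall i, g1 'X_i = g2 'X_i) ->
  g1 =1 g2.
Proof.
move=> eqC eqX p; rewrite (mpolyE p) !rmorph_sum; apply: eq_bigr => m _.
rewrite -mul_mpolyC !rmorphM eqC mpolyXE_id !rmorph_prod; congr (_ * _).
by apply: eq_bigr => i _; rewrite !rmorphXn eqX.
Qed.

Lemma comp_mpolyA (R : comNzRingType) m k l (p : {mpoly R[m]})
    (t : m.-tuple {mpoly R[k]}) (t' : k.-tuple {mpoly R[l]}) :
  (p \mPo t) \mPo t' = p \mPo [tuple tnth t i \mPo t' | i < m].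
Proof.
apply: (@eq_mpoly_rmorph _ _ _ (comp_mpoly t' \o comp_mpoly t)) => [a|i] /=.
  by rewrite !comp_mpolyC.
by rewrite !comp_mpolyXU -!tnth_nth tnth_mktuple.
Qed.

Lemma comp_mpolyM (R : comNzRingType) m k (t : m.-tuple {mpoly R[k]}) :
  {morph comp_mpoly t : x y / x * y}.
Proof. exact: rmorphM. Qed.

Lemma comp_mpolyXn (R : comNzRingType) m k (t : m.-tuple {mpoly R[k]}) e :
  {morph comp_mpoly t : x / x ^+ e}.
Proof. exact: rmorphXn. Qed.

Lemma comp_mpoly_sum (R : comNzRingType) m k (t : m.-tuple {mpoly R[k]}) I (r : seq I)
    (P : pred I) (G : I -> {mpoly R[m]}) :
  (\sum_(i <- r | P i) G i) \mPo t = \sum_(i <- r | P i) (G i \mPo t).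
Proof. exact: raddf_sum. Qed.

Lemma expf_card_exp (F : finFieldType) (a : F) t : a ^+ (#|F| ^ t) = a.
Proof. by elim: t => [|t IH]; rewrite ?expr1 // expnSr exprM IH expf_card. Qed.

Lemma frobenius_lin_comb (F : finFieldType) (A : comAlgType F) t k
    (cs : 'I_k -> F) (v : 'I_k -> A) :
  (\sum_(j < k) cs j *: v j) ^+ (#|F| ^ t) = \sum_(j < k) cs j *: v j ^+ (#|F| ^ t).
Proof.
have [p p_pr pF] := finPcharP F.
have pA : p \in [pchar A] := rmorph_pchar (in_alg A) pF.
have qA : [pchar A].-nat (#|F| ^ t)%N.
  by rewrite (card_pprimeChar pF) -expnM pnatX (pnatE _ p_pr) pA.
elim/big_rec2: _ => [|j u w _ <-].
  by rewrite expr0n expn_eq0 eqn0Ngt (ltnW (finNzRing_gt1 F)).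
by rewrite (exprDn_pchar _ _ qA) exprZn expf_card_exp.
Qed.

Lemma det_dependent_col (R : comNzRingType) m (M : 'M[R]_m) (i0 r0 : 'I_m)
    (d : 'I_m -> R) :
  (forall r, r != r0 -> M r i0 = \sum_(l < m | (l < i0)%N) d l * M r l) ->
  \det M = (M r0 i0 - \sum_(l < m | (l < i0)%N) d l * M r0 l) * cofactor M r0 i0.
Proof.
move=> dep_col.
pose E : 'M[R]_m := \matrix_(l, j) (((j == i0) && (l < i0)%N)%:R * - d l).
have detE : \det (1%:M + E) = 1.
  have trigE : is_trig_mx (1%:M + E)^T.
    apply/is_trig_mxP => i j lt_ij; rewrite !mxE.
    have /negbTE -> : j != i by apply: contraTneq lt_ij => ->; rewrite ltnn.
    by rewrite add0r; case: eqP => [<-|]; rewrite ?ltnNge ?(ltnW lt_ij) /= mul0r.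
  rewrite -det_tr (det_trig trigE) big1 // => i _.
  by rewrite !mxE eqxx; case: eqP => [->|]; rewrite ?ltnn /= mul0r addr0.
pose M' := M *m (1%:M + E).
have M'E r j : M' r j = if j == i0 then M r i0 - \sum_(l < m | (l < i0)%N) d l * M r l
                        else M r j.
  rewrite /M' /E mulmxDr mulmx1 !mxE; case: eqP => [->|/eqP/negbTE nj].
    rewrite -sumrN; congr (_ + _); rewrite [RHS]big_mkcond; apply: eq_bigr => l _.
    by rewrite mxE eqxx; case: (l < i0)%N; rewrite ?mul1r ?mul0r ?mulr0 // mulrN mulrC.
  by rewrite big1 ?addr0 // => l _; rewrite mxE nj mul0r mulr0.
have detM : \det M = \det M' by rewrite det_mulmx detE mulr1.
clearbody M'.
have cofE : cofactor M' r0 i0 = cofactor M r0 i0.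
  rewrite /cofactor; congr (_ * \det _); apply/matrixP => r j.
  by rewrite !mxE M'E eq_sym (negbTE (neq_lift _ _)).
rewrite detM (expand_det_col _ i0) (bigD1 r0) //= big1 ?addr0 ?cofE ?M'E ?eqxx //.
by move=> r /dep_col; rewrite M'E eqxx => ->; rewrite subrr mul0r.
Qed.

Lemma is_poly_frac_divP (R : idomainType) (N L : R) : L != 0 ->
  is_poly_frac (N%:F / L%:F) <-> exists G, N = L * G.
Proof.
move=> L_neq0; have L'_neq0 : L%:F != 0 by rewrite tofrac_eq0.
split=> [[G NE]|[G ->]]; exists G; last by rewrite tofracM mulrC mulKf.
by apply/eqP; rewrite -tofrac_eq tofracM mulrC -NE divfK.
Qed.

Section Moore.
Variables (F : finFieldType) (c : nat).
Local Notation n := c.+1.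
Local Notation R := {mpoly F[n]}.
Local Notation q := #|F|.
Local Notation var p := ('X_(inord p : 'I_n) : R).
Local Notation moore_mx k := (\matrix_(t < k, j < k) var j ^+ (q ^ t)).
Local Notation L := (moore_det F c).

Definition lin k (cs : 'I_k -> F) : R := \sum_(j < k) cs j *: var j.

Definition pad0 k (cs : 'I_k -> F) (j : nat) : F := odflt 0 (omap cs (insub j)).

Definition subx (i : nat) (v : R) : {rmorphism R -> R} :=
  comp_mpoly [tuple if (j : nat) == i then v else 'X_j | j < n].

Definition polx (i : nat) : {rmorphism R -> {poly R}} :=
  mmap (polyC \o @mpolyC n F) (fun j : 'I_n => if (j : nat) == i then 'X else ('X_j)%:P).

Lemma subx_var i v p : (p < n)%N -> subx i v (var p) = if p == i then v else var p.
Proof. by move=> lt_pn; rewrite /subx /= comp_mpolyXU -tnth_nth tnth_mktuple inordK. Qed.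

Lemma subx_id i p : (i < n)%N -> subx i (var i) p = p.
Proof.
move=> lt_in; rewrite /subx /= -[RHS]comp_mpoly_id; congr comp_mpoly.
by apply: eq_from_tnth => j; rewrite !tnth_mktuple; case: eqP => // <-; rewrite inord_val.
Qed.

Lemma horner_polx i v p : (polx i p).[v] = subx i v p.
Proof.
apply: (@eq_mpoly_rmorph _ _ _ (horner_eval v \o polx i) (subx i v)) => [a|j] /=.
  by rewrite /polx /subx /= mmapC /= horner_evalE hornerC comp_mpolyC.
rewrite /polx /subx /= horner_evalE mmapX mmap1U comp_mpolyXU -tnth_nth tnth_mktuple.
by case: eqP; rewrite ?hornerX ?hornerC.
Qed.

Lemma polx_var i p : (p < n)%N -> polx i (var p) = if p == i then 'X else (var p)%:P.
Proof. by move=> lt_pn; rewrite /polx /= mmapX mmap1U /= inordK. Qed.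

Lemma mcoeff_var p j : (p < n)%N -> (j < n)%N -> (var p)@_U_(inord j) = (p == j)%:R.
Proof. by move=> lt_pn lt_jn; rewrite mcoeffXU -val_eqE /= !inordK. Qed.

Lemma var_comp p (G : nat -> R) : (p < n)%N -> var p \mPo [tuple G j | j < n] = G p.
Proof. by move=> lt_pn; rewrite comp_mpolyXU -tnth_nth tnth_mktuple inordK. Qed.

Lemma var_neq0 p : (p < n)%N -> var p != 0.
Proof.
move=> lt_pn; apply/eqP => /(congr1 (mcoeff U_(inord p))) /eqP.
by rewrite mcoeff_var // eqxx mcoeff0 oner_eq0.
Qed.

Lemma bump_ltn j m : (m < c)%N -> (bump j m < n)%N.
Proof. by rewrite /bump; case: (j <= m)%N => /=; lia. Qed.

Lemma pad0E k (cs : 'I_k -> F) (j : 'I_k) : pad0 cs j = cs j.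
Proof. by rewrite /pad0 valK. Qed.

Lemma pad0_out k (cs : 'I_k -> F) j : (k <= j)%N -> pad0 cs j = 0.
Proof. by move=> le_kj; rewrite /pad0 insubF // ltnNge le_kj. Qed.

Lemma sum_pad0_lt i m (cs : 'I_i -> F) (G : nat -> R) : (i <= m)%N ->
  \sum_(l < m | (l < i)%N) (pad0 cs l)%:MP * G l = \sum_(j < i) cs j *: G j.
Proof.
move=> le_im; under [RHS]eq_bigr => j _ do rewrite -pad0E.
by rewrite (big_ord_widen m (fun j => pad0 cs j *: G j)) //; under eq_bigr do rewrite mul_mpolyC.
Qed.

Lemma sum_pad0 i m (cs : 'I_i -> F) (G : nat -> R) : (i <= m)%N ->
  \sum_(l < m) pad0 cs l *: G l = \sum_(j < i) cs j *: G j.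
Proof.
move=> le_im; rewrite -(sum_pad0_lt _ _ le_im) [RHS]big_mkcond; apply: eq_bigr => l _.
by case: ltnP => [_|/pad0_out ->]; rewrite ?mul_mpolyC ?scale0r.
Qed.

Lemma lin_pad0 i k (cs : 'I_i -> F) : (i <= k)%N -> lin (fun j : 'I_k => pad0 cs j) = lin cs.
Proof. exact: (sum_pad0 cs (fun l => var l)). Qed.

Lemma mcoeff_lin k (cs : 'I_k -> F) j : (k <= n)%N -> (j < n)%N ->
  (lin cs)@_U_(inord j) = pad0 cs j.
Proof.
move=> le_kn lt_jn; rewrite -(lin_pad0 cs le_kn) (raddf_sum (mcoeff _)) /=.
rewrite (bigD1 (Ordinal lt_jn)) //= big1 => [|l /negbTE nlj]; last first.
  by rewrite mcoeffZ mcoeff_var // -[j]/(val (Ordinal lt_jn)) val_eqE nlj mulr0.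
by rewrite addr0 mcoeffZ mcoeff_var // eqxx mulr1.
Qed.

Lemma lin_exp_card k (cs : 'I_k -> F) t :
  lin cs ^+ (q ^ t) = \sum_(j < k) cs j *: var j ^+ (q ^ t).
Proof. exact: frobenius_lin_comb. Qed.

Lemma subx_var_exp i (cs : 'I_i -> F) t : (i < n)%N ->
  subx i (lin cs) (var i ^+ (q ^ t)) = \sum_(j < i) cs j *: var j ^+ (q ^ t).
Proof. by move=> lt_in; rewrite rmorphXn subx_var // eqxx lin_exp_card. Qed.

Lemma subx_var_lt i v j t : (j < i)%N -> (i < n)%N -> subx i v (var j ^+ t) = var j ^+ t.
Proof. by move=> lt_ji lt_in; rewrite rmorphXn subx_var ?(ltn_eqF lt_ji) ?(ltn_trans lt_ji). Qed.

Lemma subx_moore_col m (i : 'I_m) (cs : 'I_i -> F) t : (m <= n)%N ->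
  subx i (lin cs) (var i ^+ (q ^ t))
  = \sum_(l < m | (l < i)%N) (pad0 cs l)%:MP * subx i (lin cs) (var l ^+ (q ^ t)).
Proof.
move=> le_mn; have lt_in := leq_trans (ltn_ord i) le_mn.
rewrite subx_var_exp // (sum_pad0_lt cs (fun l => subx i (lin cs) (var l ^+ (q ^ t)))) 1?ltnW //.
by apply: eq_bigr => j _; rewrite subx_var_lt.
Qed.

Definition span_pts k : seq R := [seq lin cs | cs : {ffun 'I_k -> F}].

Definition span_poly k : {poly R} := \prod_(v <- span_pts k) ('X - v%:P).

Lemma uniq_span_pts k : (k <= n)%N -> uniq (span_pts k).
Proof.
move=> le_kn; rewrite map_inj_uniq ?enum_uniq // => cs1 cs2 eq_lin.
apply/ffunP => j; rewrite -!(pad0E (fun j => _ j)).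
by rewrite -!(mcoeff_lin _ le_kn (leq_trans (ltn_ord j) le_kn)) eq_lin.
Qed.

Lemma size_span_pts k : size (span_pts k) = (q ^ k)%N.
Proof. by rewrite size_map -cardE card_ffun card_ord. Qed.

Lemma monic_span_poly k : span_poly k \is monic.
Proof. exact: monic_prod_XsubC. Qed.

Lemma size_span_poly k : size (span_poly k) = (q ^ k).+1.
Proof. by rewrite size_prod_XsubC size_span_pts. Qed.

Lemma root_span_poly k (cs : 'I_k -> F) : root (span_poly k) (lin cs).
Proof.
rewrite root_prod_XsubC; apply/mapP; exists [ffun j => cs j]; rewrite ?mem_enum //.
by apply: eq_bigr => j _; rewrite ffunE.
Qed.

Lemma span_poly_factor k (P : {poly R}) : (k <= n)%N ->
  (forall cs : 'I_k -> F, root P (lin cs)) -> exists S, P = S * span_poly k.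
Proof.
move=> le_kn P_root; exists (P %/ span_poly k).
have P_eq := Pdiv.IdomainMonic.divp_eq (monic_span_poly k) P.
suff r0 : P %% span_poly k = 0 by rewrite {1}P_eq r0 addr0.
apply: contraTeq (ltn_modpN0 P (monic_neq0 (monic_span_poly k))) => r_neq0.
rewrite -leqNgt size_span_poly -size_span_pts max_poly_roots ?uniq_span_pts //.
apply/allP => _ /mapP [cs _ ->]; have := P_root cs.
by rewrite /root {1}P_eq hornerD hornerM (eqP (root_span_poly cs)) mulr0 add0r.
Qed.

Lemma subx_moore_lin k (cs : 'I_k -> F) : (k < n)%N -> subx k (lin cs) (L k.+1) = 0.
Proof.
move=> lt_kn; set M := map_mx (subx k (lin cs)) (moore_mx k.+1).
have col_dep (t : 'I_k.+1) : M t ord_max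
    = \sum_(l < k.+1 | (l < @ord_max k)%N) (pad0 cs l)%:MP * M t l.
  rewrite !mxE (subx_moore_col (i := ord_max)) //.
  by apply: eq_bigr => l _; rewrite !mxE.
rewrite /moore_det -det_map_mx -/M (det_dependent_col (r0 := ord_max) (fun r _ => col_dep r)).
by rewrite col_dep subrr mul0r.
Qed.

Lemma subx_moore i v k : (k <= i)%N -> (i < n)%N -> subx i v (L k) = L k.
Proof.
move=> le_ki lt_in; rewrite /moore_det -det_map_mx; congr (\det _).
by apply/matrixP => t j; rewrite !mxE subx_var_lt // (leq_trans (ltn_ord j)).
Qed.

Lemma coef_polx_moore k j : (k < n)%N ->
  (polx k (L k.+1))`_j
  = \sum_(t < k.+1) cofactor (moore_mx k.+1) t ord_max * (j == (q ^ t)%N)%:R.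
Proof.
move=> lt_kn; rewrite /moore_det -det_map_mx (expand_det_col _ ord_max) coef_sum.
apply: eq_bigr => t _; rewrite !mxE rmorphXn polx_var // eqxx.
have -> : cofactor (map_mx (polx k) (moore_mx k.+1)) t ord_max
          = (cofactor (moore_mx k.+1) t ord_max)%:P.
  rewrite /cofactor rmorphM rmorph_sign -det_map_mx; congr (_ * \det _).
  apply/matrixP => r j'; have lt_j'k : (lift ord_max j' < k)%N.
    by rewrite lift_max; exact: ltn_ord.
  by rewrite !mxE !rmorphXn polx_var ?(ltn_eqF lt_j'k) ?(ltn_trans lt_j'k).
by rewrite coefMC coefXn mulrC.
Qed.

Lemma polx_moore_top k : (k < n)%N -> (polx k (L k.+1))`_(q ^ k) = L k.
Proof.
move=> lt_kn; rewrite coef_polx_moore // (bigD1 ord_max) // big1 => [|t t_neq].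
  rewrite Monoid.mulm1 eqxx mulr1 /cofactor addnn -signr_odd odd_double mul1r /moore_det.
  by congr (\det _); apply/matrixP => t j; rewrite !mxE !lift_max.
have /negbTE t_neq' : (t : nat) != k := t_neq.
by rewrite eqn_exp2l ?finNzRing_gt1 // eq_sym t_neq' mulr0.
Qed.

Lemma size_polx_moore k : (k < n)%N -> (size (polx k (L k.+1)) <= (q ^ k).+1)%N.
Proof.
move=> lt_kn; apply/leq_sizeP => j lt_j; rewrite coef_polx_moore // big1 // => t _.
case: eqP => [j_eq|]; rewrite ?mulr0 //; move: lt_j.
by rewrite j_eq ltn_exp2l ?finNzRing_gt1 // ltnNge -ltnS ltn_ord.
Qed.

(* As a polynomial in [x_k], [L k.+1] has degree [q ^ k], top coefficient [L k], and
   vanishes on the span of [x_0, ..., x_(k-1)]. *)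
Lemma moore_rec k : (k < n)%N -> L k.+1 = L k * (span_poly k).[var k].
Proof.
move=> lt_kn; set P := polx k (L k.+1).
have [S PE] : exists S, P = S * span_poly k.
  apply: span_poly_factor (ltnW lt_kn) _ => cs.
  by rewrite /root horner_polx subx_moore_lin.
have Q_top : (span_poly k)`_(q ^ k) = 1.
  by move: (monicP (monic_span_poly k)); rewrite lead_coefE size_span_poly.
have SE : S = (L k)%:P.
  have [S0|S_neq0] := eqVneq S 0.
    by move: (polx_moore_top lt_kn); rewrite -/P PE S0 mul0r coef0 => <-; rewrite polyC0.
  have : (size S <= 1)%N.
    move: (size_polx_moore lt_kn); rewrite -/P PE size_Mmonic ?monic_span_poly //.
    by rewrite size_span_poly addnS /=; lia.
  move/size1_polyC => SE; move: (polx_moore_top lt_kn).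
  by rewrite -/P PE SE coefCM Q_top mulr1 => ->.
by rewrite -{1}(subx_id (L k.+1) lt_kn) -horner_polx -/P PE SE hornerM hornerC.
Qed.

Lemma moore_neq0 k : (k <= n)%N -> L k != 0.
Proof.
elim: k => [|k IH] le_kn; first by rewrite /moore_det det_mx00 oner_neq0.
rewrite moore_rec // mulf_neq0 ?IH 1?ltnW //.
rewrite horner_prod prodf_seq_neq0; apply/allP => _ /mapP [cs _ ->] /=.
rewrite hornerXsubC subr_eq0; apply/eqP => /(congr1 (mcoeff U_(inord k))) /eqP.
by rewrite mcoeff_var // (mcoeff_lin cs (ltnW le_kn) le_kn) (pad0_out cs (leqnn k)) eqxx oner_eq0.
Qed.

Lemma moore_dvd k (P : R) : (k <= n)%N ->
    (forall i, (i < k)%N -> forall cs : 'I_i -> F, subx i (lin cs) P = 0) ->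
  exists G, P = L k * G.
Proof.
elim: k P => [|k IH] P le_kn P0; first by exists P; rewrite /moore_det det_mx00 mul1r.
have [H PE] := IH P (ltnW le_kn) (fun i lt_ik => P0 i (ltnW lt_ik)).
have [S HE] : exists S, polx k H = S * span_poly k.
  apply: span_poly_factor (ltnW le_kn) _ => cs; rewrite /root horner_polx.
  have := P0 k (ltnSn k) cs; rewrite PE rmorphM (subx_moore _ (leqnn k) le_kn) => /eqP.
  by rewrite mulf_eq0 (negbTE (moore_neq0 (ltnW le_kn))).
exists S.[var k]; rewrite moore_rec // PE -{1}(subx_id H le_kn) -horner_polx HE hornerM.
by rewrite [S.[_] * _]mulrC mulrA.
Qed.

Definition cyc (i k p : nat) : nat :=
  if (p < i)%N then p else if (p < k)%N then p.+1 else if p == k then i else p.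

Ltac nat_cases := rewrite /cyc /bump; repeat case: ifP => ?; repeat case: leqP => ?; lia.

Lemma cyc_ltn i k m N : (i <= k)%N -> (k < N)%N -> (m < N)%N -> (cyc i k m < N)%N.
Proof. by move=> *; nat_cases. Qed.

Lemma cyc_bump i k m : (i <= k)%N -> cyc i k (bump k m) = bump i m.
Proof. by move=> ?; nat_cases. Qed.

Lemma bump_cyc_pred i k m : (i < k)%N ->
  (if bump i m == k then i else bump i m) = bump k (cyc i k.-1 m).
Proof. by move=> ?; nat_cases. Qed.

Lemma bump_cyc_eq j i k m : (j < i)%N -> (i <= k)%N ->
  (bump j (cyc i.-1 k.-1 m) == i) = (bump j m == k).
Proof. by move=> *; apply/eqP/eqP; nat_cases. Qed.

Lemma bump_cyc_neq j i k m : (j < i)%N -> (i <= k)%N -> bump j m != k ->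
  bump j (cyc i.-1 k.-1 m) = cyc i k (bump j m).
Proof. by move=> ? ? /eqP ?; nat_cases. Qed.

Lemma var_comp_cyc i k p : (p < i)%N -> (i <= n)%N ->
  var p \mPo [tuple var (cyc i k j) | j < n] = var p.
Proof.
move=> lt_pi le_in; rewrite (var_comp (fun j => var (cyc i k j))).
  by rewrite /cyc lt_pi.
exact: leq_trans lt_pi le_in.
Qed.

Lemma lin_comp_cyc i k (cs : 'I_i -> F) : (i <= n)%N ->
  lin cs \mPo [tuple var (cyc i k j) | j < n] = lin cs.
Proof.
move=> le_in; rewrite /lin raddf_sum /=; apply: eq_bigr => j _.
by rewrite comp_mpolyZ var_comp_cyc.
Qed.

Section Defect.
Variables (b : nat) (f : {mpoly F[c]}).

Definition delta_mx k : 'M[R]_k.+1 := \matrix_(t, j)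
  (if (t < k)%N then var j ^+ (q ^ t) else var j ^+ (q ^ b) * fhat f (inord j)).

(* On the hyperplane [x_i = lin cs], subtracting [cs j] times column [j < i] from
   column [i] of [delta_mx k] leaves in column [i] only this last-row entry. *)
Definition delta_defect i (cs : 'I_i -> F) : R :=
  lin cs ^+ (q ^ b) * fhat f (inord i)
  - \sum_(j < i) cs j *: (var j ^+ (q ^ b) * subx i (lin cs) (fhat f (inord j))).

(* [f] evaluated at [(G 0, ..., G (c-1))]; locked, since letting unification unfold
   the composition makes rewriting intractably slow. *)
Fact fval_key : unit. Proof. by []. Qed.
Definition fval (G : nat -> R) : R := locked_with fval_key (f \mPo [tuple G m | m < c]).
Lemma fvalE G : fval G = f \mPo [tuple G m | m < c].
Proof. exact: unlock. Qed.

Lemma eq_fval G1 G2 : (forall m, (m < c)%N -> G1 m = G2 m) -> fval G1 = fval G2.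
Proof.
move=> eqG; rewrite !fvalE; congr comp_mpoly.
by apply: eq_from_tnth => m; rewrite !tnth_mktuple eqG.
Qed.

Lemma comp_fval G (t : n.-tuple R) : fval G \mPo t = fval (fun m => G m \mPo t).
Proof.
rewrite !fvalE.
have -> : [tuple G m \mPo t | m < c] = [tuple tnth [tuple G m | m < c] i \mPo t | i < c].
  by apply: eq_from_tnth => m; rewrite !tnth_mktuple.
exact: comp_mpolyA.
Qed.

Lemma subx_fval i v G : subx i v (fval G) = fval (fun m => subx i v (G m)).
Proof. exact: comp_fval. Qed.

Lemma fhat_fval j : (j < n)%N -> fhat f (inord j) = fval (fun m => var (bump j m)).
Proof.
move=> lt_jn; rewrite fvalE; congr comp_mpoly; apply: eq_from_tnth => m.
by rewrite !tnth_mktuple inordK.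
Qed.

Lemma fhat_y_fval a y j : (j < n)%N ->
  fhat_y a f y (inord j) = fval (fun m => if bump j m == a.-1 then y else var (bump j m)).
Proof.
move=> lt_jn; rewrite fvalE; congr comp_mpoly; apply: eq_from_tnth => m.
by rewrite !tnth_mktuple inordK.
Qed.

Lemma subx_fhat_id i v : (i < n)%N -> subx i v (fhat f (inord i)) = fhat f (inord i).
Proof.
move=> lt_in; rewrite fhat_fval // subx_fval; apply: eq_fval => m lt_mc.
by rewrite subx_var ?bump_ltn // eq_sym (negbTE (neq_bump _ _)).
Qed.

Lemma subx_delta_det k (i : 'I_k.+1) (cs : 'I_i -> F) : (k < n)%N ->
  subx i (lin cs) (\det (delta_mx k))
  = delta_defect cs * cofactor (map_mx (subx i (lin cs)) (delta_mx k)) ord_max i.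
Proof.
move=> lt_kn; have lt_in : (i < n)%N := leq_trans (ltn_ord i) lt_kn.
set M := map_mx (subx i (lin cs)) (delta_mx k).
have col_dep (r : 'I_k.+1) : r != ord_max ->
    M r i = \sum_(l < k.+1 | (l < i)%N) (pad0 cs l)%:MP * M r l.
  move=> r_neq; have lt_rk : (r < k)%N by rewrite ltn_neqAle r_neq -ltnS ltn_ord.
  rewrite !mxE lt_rk (subx_moore_col (i := i)) //.
  by apply: eq_bigr => l _; rewrite !mxE lt_rk.
rewrite -det_map_mx -/M (det_dependent_col col_dep); congr (_ * _).
rewrite !mxE ltnn; under eq_bigr => l _ do rewrite !mxE ltnn.
rewrite (sum_pad0_lt cs (fun l => subx i (lin cs) (var l ^+ (q ^ b) * fhat f (inord l))));
  last exact: ltnW.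
have top_entry : subx i (lin cs) (var i ^+ (q ^ b) * fhat f (inord i))
                  = lin cs ^+ (q ^ b) * fhat f (inord i).
  by rewrite rmorphM rmorphXn subx_var // eqxx subx_fhat_id.
rewrite [X in X - _]top_entry; congr (_ - _).
by apply: eq_bigr => j _; rewrite rmorphM subx_var_lt.
Qed.

Lemma cofactor_subx_delta_mx k (cs : 'I_k -> F) : (k < n)%N ->
  cofactor (map_mx (subx k (lin cs)) (delta_mx k)) ord_max ord_max = L k.
Proof.
move=> lt_kn; rewrite /cofactor addnn -signr_odd odd_double mul1r /moore_det.
congr (\det _); apply/matrixP => t j; rewrite !mxE !lift_max ltn_ord.
exact: subx_var_lt.
Qed.

Lemma subx_fhat i v j : (j < n)%N ->
  subx i v (fhat f (inord j)) = fhat_y i.+1 f v (inord j).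
Proof.
move=> lt_jn; rewrite (fhat_fval lt_jn) subx_fval (fhat_y_fval _ _ lt_jn).
by apply: eq_fval => m lt_mc; rewrite subx_var ?bump_ltn.
Qed.

Lemma delta_defect_max k (cs : 'I_k -> F) : (k < n)%N ->
  delta_defect cs = (\sum_(j < k) cs j *: var j ^+ (q ^ b)) * fhat f (inord k)
    - \sum_(j < k) cs j *: (var j ^+ (q ^ b) * fhat_y k.+1 f (lin cs) (inord j)).
Proof.
move=> lt_kn; rewrite /delta_defect lin_exp_card; congr (_ - _).
by apply: eq_bigr => j _; rewrite subx_fhat // (ltn_trans (ltn_ord j) lt_kn).
Qed.

Lemma fval_perm k (pi : nat -> nat) : (k < n)%N -> (forall m, (m < c)%N -> (pi m < c)%N) ->
    fval (fun m => var (bump k (pi m))) = fval (fun m => var (bump k m)) ->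
  forall G, fval (fun m => G (pi m)) = fval G.
Proof.
move=> lt_kn pi_c eq_f G; pose t := [tuple G (unbump k p) | p < n].
have tE m : (m < c)%N -> var (bump k m) \mPo t = G m.
  by move=> lt_mc; rewrite (var_comp (fun p => G (unbump k p))) ?bumpK ?bump_ltn.
have := congr1 (comp_mpoly t) eq_f; rewrite !comp_fval => eq_ft.
apply: (@etrans _ _ (fval (fun m => var (bump k (pi m)) \mPo t))).
  by apply: eq_fval => m /pi_c/tE ->.
by rewrite eq_ft; apply: eq_fval => m /tE ->.
Qed.

(* With [cs] the [i]-th unit vector, the vanishing defect reads
   [f(x^_i)[x_k := x_i] = f(x^_k)], a cyclic shift of the arguments of [f]. *)
Lemma defect_eq0_cyc_invariant k : (k < n)%N -> (forall cs : 'I_k -> F, delta_defect cs = 0) ->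
  forall i, (i < k)%N -> forall G, fval (fun m => G (cyc i k.-1 m)) = fval G.
Proof.
move=> lt_kn D0 i lt_ik; apply: (fval_perm lt_kn) => [m lt_mc|].
  by apply: cyc_ltn; lia.
pose e (j : 'I_k) : F := (j == Ordinal lt_ik)%:R.
have sum_e (G : 'I_k -> R) : \sum_(j < k) e j *: G j = G (Ordinal lt_ik).
  rewrite (bigD1 (Ordinal lt_ik)) //= big1 => [|j /negbTE j_neq]; last first.
    by rewrite /e j_neq scale0r.
  by rewrite /e eqxx scale1r addr0.
have := D0 e; rewrite /delta_defect [lin e]sum_e sum_e -mulrBr => /eqP.
rewrite mulf_eq0 expf_eq0 (negbTE (var_neq0 (ltn_trans lt_ik lt_kn))) andbF /=.
rewrite subr_eq0 => /eqP fhat_k.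
rewrite -(fhat_fval lt_kn) fhat_k (fhat_fval (ltn_trans lt_ik lt_kn)) subx_fval.
apply: eq_fval => m lt_mc; rewrite subx_var ?bump_ltn // -bump_cyc_pred //.
by case: eqP.
Qed.

Lemma fhat_comp_cyc i k : (i <= k)%N -> (k < n)%N ->
  fhat f (inord k) \mPo [tuple var (cyc i k p) | p < n] = fhat f (inord i).
Proof.
move=> le_ik lt_kn; rewrite !fhat_fval ?(leq_ltn_trans le_ik) // comp_fval.
apply: eq_fval => m lt_mc.
by rewrite (var_comp (fun p => var (cyc i k p))) ?bump_ltn // cyc_bump.
Qed.

Lemma subx_fhat_comp_cyc i k j (cs : 'I_i -> F) : (j < i)%N -> (i <= k)%N -> (k < n)%N ->
    (forall G, fval (fun m => G (cyc i.-1 k.-1 m)) = fval G) ->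
  subx k (lin cs) (fhat f (inord j)) \mPo [tuple var (cyc i k p) | p < n]
  = subx i (lin cs) (fhat f (inord j)).
Proof.
move=> lt_ji le_ik lt_kn inv; have lt_jn : (j < n)%N by lia.
rewrite (fhat_fval lt_jn) [in X in X = _]subx_fval [in X in _ = X]subx_fval comp_fval.
rewrite -[RHS]inv; apply: eq_fval => m lt_mc.
have lt_cyc : (cyc i.-1 k.-1 m < c)%N by apply: cyc_ltn; lia.
rewrite (subx_var _ _ (bump_ltn _ lt_mc)) (subx_var _ _ (bump_ltn _ lt_cyc)) bump_cyc_eq //.
case: eqP => [_|/eqP ne].
  by rewrite lin_comp_cyc //; lia.
by rewrite (var_comp (fun p => var (cyc i k p))) ?bump_ltn // bump_cyc_neq.
Qed.

Lemma delta_defect_cyc k i (cs : 'I_i -> F) : (i <= k)%N -> (k < n)%N ->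
    (forall i', (i' < k)%N -> forall G, fval (fun m => G (cyc i' k.-1 m)) = fval G) ->
  delta_defect cs
  = delta_defect (fun j : 'I_k => pad0 cs j) \mPo [tuple var (cyc i k p) | p < n].
Proof.
move=> le_ik lt_kn inv; rewrite /delta_defect lin_pad0 //.
rewrite (sum_pad0 cs (fun j => var j ^+ (q ^ b) * subx k (lin cs) (fhat f (inord j)))) //.
set t := [tuple var (cyc i k p) | p < n].
have le_in : (i <= n)%N by lia.
have top_term : (lin cs ^+ (q ^ b) * fhat f (inord k)) \mPo t
                = lin cs ^+ (q ^ b) * fhat f (inord i).
  by rewrite comp_mpolyM comp_mpolyXn lin_comp_cyc // fhat_comp_cyc.
have sum_term (j : 'I_i) :
    (cs j *: (var j ^+ (q ^ b) * subx k (lin cs) (fhat f (inord j)))) \mPo t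
    = cs j *: (var j ^+ (q ^ b) * subx i (lin cs) (fhat f (inord j))).
  have inv_i G : fval (fun m => G (cyc i.-1 k.-1 m)) = fval G.
    by apply: inv; have := ltn_ord j; lia.
  rewrite comp_mpolyZ comp_mpolyM comp_mpolyXn.
  rewrite [X in X ^+ _](var_comp_cyc k (ltn_ord j) le_in).
  by rewrite (subx_fhat_comp_cyc _ (ltn_ord j) le_ik lt_kn inv_i).
by rewrite comp_mpolyB top_term comp_mpoly_sum (eq_bigr _ (fun j _ => sum_term j)).
Qed.

Lemma delta_defect_eq0 k : (k < n)%N -> (forall cs : 'I_k -> F, delta_defect cs = 0) ->
  forall i (cs : 'I_i -> F), (i <= k)%N -> delta_defect cs = 0.
Proof.
move=> lt_kn D0 i cs le_ik.
by rewrite (delta_defect_cyc cs le_ik lt_kn (defect_eq0_cyc_invariant lt_kn D0)) D0 rmorph0.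
Qed.

Lemma delta_polyP k : (k < n)%N ->
  is_poly_frac (delta k.+1 b f) <-> forall cs : 'I_k -> F, delta_defect cs = 0.
Proof.
move=> lt_kn; rewrite /delta -[delta_num _ _ _]/(\det (delta_mx k)).
rewrite is_poly_frac_divP ?moore_neq0 //; split=> [[G NE] cs | D0].
  have := subx_delta_det (i := ord_max) cs lt_kn.
  rewrite cofactor_subx_delta_mx // NE rmorphM subx_moore_lin // mul0r => /esym/eqP.
  by rewrite mulf_eq0 (negbTE (moore_neq0 (ltnW lt_kn))) orbF => /eqP.
apply: moore_dvd => // i lt_ik cs.
by rewrite (subx_delta_det (i := Ordinal lt_ik)) // (delta_defect_eq0 lt_kn D0) ?mul0r.
Qed.

End Defect.
End Moore.

Theorem mainTheorem9 (F : finFieldType) (c a b : nat) (f : {mpoly F[c]}) :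
  (1 <= a)%N -> (a <= c.+1)%N ->
  (is_poly_frac (delta a b f) <->
   (forall cs : 'I_a.-1 -> F,
      let y := y_lin c cs in
      \sum_(i < a.-1) cs i *: ('X_(inord i : 'I_c.+1) ^+ (#|F| ^ b)
                               * fhat_y a f y (inord i))
      = (\sum_(j < a.-1) cs j *: ('X_(inord j : 'I_c.+1) ^+ (#|F| ^ b)))
        * fhat f (inord a.-1))).
Proof.
case: a => [//|k] _ lt_kn; rewrite delta_polyP //.
split=> D0 cs; last by have /= E := D0 cs; rewrite delta_defect_max // -E subrr.
by move: (D0 cs); rewrite delta_defect_max // => /eqP; rewrite subr_eq0 => /eqP ->.
Qed.
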